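(* Let $\mathbf i\in\mathbb C$ with $\mathbf i^2=-1$ and let $\beta_m=[x^m]\Big(\frac{1+x}{1+\mathbf i}\prod_{k=0}^\infty\big(1+\mathbf i\,x^{2^k}\big)\Big)$ for $m\ge0$. For $n\ge1$, let $H(n)$ be the $n\times n$ Hankel matrix with entries $H(n)_{a,b}=\beta_{a+b+1}$, $0\le a,b<n$. Then $\det(H(n))=(-\mathbf i)^{\lfloor n/2\rfloor}$.
   Context: $[x^m]f$ denotes the coefficient of $x^m$ in the formal power series $f\in\mathbb C[[x]]$. *)

From mathcomp Require Import all_boot all_order all_algebra all_field.
Set Implicit Arguments. Unset Strict Implicit. Unset Printing Implicit Defensive.
Import GRing.Theory Num.Theory.
Local Open Scope ring_scope.

(* The coefficient of x^m of the infinite product only depends on the factors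
   with 2^k <= m, so it equals the coefficient of x^m of the finite product
   over k < m.+1 (all remaining factors are 1 mod x^(m+1)). *)
Definition beta (m : nat) : algC :=
  ((1 + 'X) * \prod_(k < m.+1) (1 + ('i)%:P * 'X^(2 ^ k)))`_m / (1 + 'i).

Definition hankelH (n : nat) : 'M[algC]_n :=
  \matrix_(a < n, b < n) beta (a + b + 1).

(* Write [t_m] for the coefficients of [prod_k (1 + i x^(2^k))]; then [t_(2m) = t_m],
   [t_(2m+1) = i t_m] and [beta_(m+1) = (t_m + t_(m+1)) / (1 + i)].  A Hankel matrix
   [(s_(a+b))] is the Gram matrix of the monomials for the bilinear form
   [(p, q) |-> L_s(p q)], where [L_s(x^m) = s_m], so its determinant can be computed
   in any basis, up to the square of the determinant of the change of basis.  In the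
   basis of the even monomials [x^(2p)] followed by the pairs
   [-i x^(2q) + (1 + i) x^(2q+1)], the Gram matrix of [beta_(m+1)] only involves [t],
   and up to a scalar the same matrix arises for [t_m - t_(m+1)] in a similar basis.
   In a second basis it splits into Hankel matrices of [t_m + t_(m+1)] and
   [t_m - t_(m+1)] of half the size.  This gives a recursion between the Hankel
   determinants of these two sequences, solved by strong induction: they are
   [(1 + i)^(n mod 2) 2^(n/2)] and [(1 - i)^(n mod 2) 2^(n/2)]. *)

Set Warnings "-notation-overridden,-ambiguous-paths".
From mathcomp Require Import all_boot all_order all_algebra all_field.
From mathcomp Require Import ring zify.
Import GRing.Theory Num.Theory.
Local Open Scope ring_scope.
Set Implicit Arguments. Unset Strict Implicit. Unset Printing Implicit Defensive.

Section NatMatrices.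
Variable R : comPzRingType.

Lemma det_mx_reindex n (sigma : nat -> nat) (f : nat -> nat -> R) :
    (forall i, (i < n)%N -> (sigma i < n)%N) ->
    {in gtn n &, injective sigma} ->
  \det (\matrix_(i < n, j < n) f (sigma i) (sigma j)) =
  \det (\matrix_(i < n, j < n) f i j).
Proof.
move=> sigma_lt sigma_inj.
pose s (i : 'I_n) : 'I_n := Ordinal (sigma_lt i (ltn_ord i)).
have s_inj : injective s.
  by move=> i j /(congr1 val) /= /sigma_inj eq_ij; apply/val_inj/eq_ij; rewrite inE.
pose p := perm.perm s_inj.
have -> : \matrix_(i < n, j < n) f (sigma i) (sigma j) =
          row_perm p (col_perm p (\matrix_(i < n, j < n) f i j)).
  by apply/matrixP => i j; rewrite !mxE !perm.permE.
rewrite row_permE col_permE !det_mulmx !det_perm perm.odd_permV.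
by rewrite mulrC -mulrA -signr_addb addbb mulr1.
Qed.

Lemma det_mx_ublock c d (f : nat -> nat -> R) :
    (forall i j, (j < c <= i)%N -> f i j = 0) ->
  \det (\matrix_(i < c + d, j < c + d) f i j) =
  \det (\matrix_(i < c, j < c) f i j) *
  \det (\matrix_(i < d, j < d) f (c + i)%N (c + j)%N).
Proof.
move=> f0; set A := \matrix_(i, j) f i j; rewrite -[A]submxK.
have -> : dlsubmx A = 0 by apply/matrixP => i j; rewrite !mxE /= f0 // ltn_ord leq_addr.
by rewrite det_ublock; congr (_ * _); congr (\det _); apply/matrixP => i j; rewrite !mxE.
Qed.

Lemma det_mx_lblock c d (f : nat -> nat -> R) :
    (forall i j, (i < c <= j)%N -> f i j = 0) ->
  \det (\matrix_(i < c + d, j < c + d) f i j) =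
  \det (\matrix_(i < c, j < c) f i j) *
  \det (\matrix_(i < d, j < d) f (c + i)%N (c + j)%N).
Proof.
move=> f0; rewrite -det_tr.
have -> : (\matrix_(i < c + d, j < c + d) f i j)^T = \matrix_(i, j) f j i.
  by apply/matrixP => i j; rewrite !mxE.
rewrite (det_mx_ublock d (f := fun i j => f j i)); last by move=> i j /f0.
by congr (_ * _); rewrite -det_tr; congr (\det _); apply/matrixP => i j; rewrite !mxE.
Qed.

End NatMatrices.

Section MomentFunctional.
Variable R : comNzRingType.
Implicit Types (s : nat -> R) (p q : {poly R}).

Definition moment s p : R := \sum_(i < size p) p`_i * s i.

Lemma moment_widen s p N : (size p <= N)%N -> moment s p = \sum_(i < N) p`_i * s i.
Proof.
move=> le_pN; rewrite /moment (big_ord_widen N (fun i => p`_i * s i) le_pN).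
rewrite big_mkcond; apply: eq_bigr => i _; case: ifP => // /negbT.
by rewrite -leqNgt => /(nth_default 0) ->; rewrite mul0r.
Qed.

Lemma momentD s p q : moment s (p + q) = moment s p + moment s q.
Proof.
pose N := maxn (size p) (size q).
rewrite !(@moment_widen s _ N) ?leq_maxl ?leq_maxr ?size_polyD // -big_split.
by apply: eq_bigr => i _; rewrite coefD mulrDl.
Qed.

Lemma momentZ s a p : moment s (a *: p) = a * moment s p.
Proof.
rewrite (@moment_widen s _ (size p)) ?size_scale_leq // /moment mulr_sumr.
by apply: eq_bigr => i _; rewrite coefZ mulrA.
Qed.

Lemma moment_sum s n (F : 'I_n -> {poly R}) :
  moment s (\sum_i F i) = \sum_i moment s (F i).
Proof.
apply: (big_morph _ (momentD s)).
by rewrite /moment size_poly0 big_ord0.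
Qed.

Lemma momentXn s m : moment s 'X^m = s m.
Proof.
rewrite /moment size_polyXn big_ord_recr /= coefXn eqxx mul1r big1 ?add0r //.
by move=> i _; rewrite coefXn /= (ltn_eqF (ltn_ord i)) mul0r.
Qed.

Definition pairX (a b : R) m : {poly R} := a *: 'X^m + b *: 'X^(m.+1).

Lemma pairX_lin x y a b c d m :
  x *: pairX a b m + y *: pairX c d m = pairX (x * a + y * c) (x * b + y * d) m.
Proof. by rewrite /pairX !scalerDr !scalerA addrACA -!scalerDl. Qed.

Lemma moment_pairXM s a b c d m n :
  moment s (pairX a b m * pairX c d n) =
  a * c * s (m + n)%N + (a * d + b * c) * s (m + n).+1 + b * d * s (m + n).+2.
Proof.
rewrite /pairX !mulrDl !mulrDr -!scalerAl -!scalerAr -!exprD !momentD !momentZ.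
by rewrite !momentXn !addSn !addnS; ring.
Qed.

Definition gram s n (B : nat -> {poly R}) : 'M[R]_n :=
  \matrix_(i, j) moment s (B i * B j).

Definition hankel s n : 'M[R]_n := \matrix_(i, j) s (i + j)%N.

Lemma eq_gram s n (B B' : nat -> {poly R}) :
  (forall i, (i < n)%N -> B i = B' i) -> gram s n B = gram s n B'.
Proof. by move=> eqB; apply/matrixP => i j; rewrite !mxE !eqB. Qed.

Lemma gram_change s n (B B' : nat -> {poly R}) (P : 'M[R]_n) :
    (forall i : 'I_n, B' i = \sum_j P i j *: B j) ->
  gram s n B' = P *m gram s n B *m P^T.
Proof.
move=> defB'; apply/matrixP => i k; rewrite !mxE !defB' mulr_suml moment_sum.
under eq_bigr do rewrite mulr_sumr moment_sum.
rewrite exchange_big; apply: eq_bigr => l _; rewrite !mxE mulr_suml.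
by apply: eq_bigr => j _; rewrite !mxE -scalerAl -scalerAr !momentZ; ring.
Qed.

Lemma det_gram_monomials s n (sigma : nat -> nat) :
    (forall i, (i < n)%N -> (sigma i < n)%N) ->
    {in gtn n &, injective sigma} ->
  \det (gram s n (fun i => 'X^(sigma i))) = \det (hankel s n).
Proof.
move=> sigma_lt sigma_inj.
rewrite -[RHS](det_mx_reindex (fun i j => s (i + j)%N) sigma_lt sigma_inj).
by congr (\det _); apply/matrixP => i j; rewrite !mxE -exprD momentXn.
Qed.

Lemma sum_scale_delta n x k (B : nat -> {poly R}) :
  \sum_(j < n) (x *+ (j == k :> nat)) *: B j = if (k < n)%N then x *: B k else 0.
Proof.
rewrite (eq_bigr (fun j : 'I_n => if (j : nat) == k then x *: B j else 0)).
  by rewrite -big_mkcond (big_ord1_eq _ (fun j => x *: B j)).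
by move=> j _; case: eqP => _; rewrite ?mulr1n ?mulr0n ?scale0r.
Qed.

Section TwoTermChange.
Variables (n : nat) (x y : nat -> R) (rho : nat -> nat).

Definition two_term_mx : 'M[R]_n :=
  \matrix_(i, j) (x i *+ (j == i :> nat) + y i *+ (j == rho i :> nat)).

Lemma gram_two_term s (B : nat -> {poly R}) :
    (forall i, (i < n)%N -> y i != 0 -> (rho i < n)%N) ->
  gram s n (fun i => x i *: B i + y i *: B (rho i)) =
  two_term_mx *m gram s n B *m two_term_mx^T.
Proof.
move=> rho_lt; apply: gram_change => i.
under eq_bigr do rewrite mxE scalerDl.
rewrite big_split /= !sum_scale_delta ltn_ord.
have [->|/(rho_lt i (ltn_ord i)) ->] := eqVneq (y i) 0; last by [].
by rewrite !scale0r; case: ifP.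
Qed.

Lemma det_two_term_mx_lower :
    (forall i, (i < n)%N -> y i != 0 -> (rho i < i)%N) ->
  \det two_term_mx = \prod_(i < n) x i.
Proof.
move=> rho_lt; rewrite det_trig; last first.
  apply/is_trig_mxP => i j lt_ij; rewrite mxE (gtn_eqF lt_ij) add0r.
  have [->|/(rho_lt i (ltn_ord i)) lt_rho] := eqVneq (y i) 0; first by rewrite mul0rn.
  by rewrite (gtn_eqF (ltn_trans lt_rho lt_ij)).
apply: eq_bigr => i _; rewrite mxE eqxx mulr1n.
have [->|/(rho_lt i (ltn_ord i)) lt_rho] := eqVneq (y i) 0; first by rewrite mul0rn addr0.
by rewrite (gtn_eqF lt_rho) addr0.
Qed.

Lemma det_two_term_mx_upper :
    (forall i, (i < n)%N -> y i != 0 -> (i < rho i)%N) ->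
  \det two_term_mx = \prod_(i < n) x i.
Proof.
move=> rho_gt; rewrite -det_tr det_trig; last first.
  apply/is_trig_mxP => i j lt_ij; rewrite !mxE (ltn_eqF lt_ij) add0r.
  have [->|/(rho_gt j (ltn_ord j)) gt_rho] := eqVneq (y j) 0; first by rewrite mul0rn.
  by rewrite (ltn_eqF (ltn_trans lt_ij gt_rho)).
apply: eq_bigr => i _; rewrite !mxE eqxx mulr1n.
have [->|/(rho_gt i (ltn_ord i)) gt_rho] := eqVneq (y i) 0; first by rewrite mul0rn addr0.
by rewrite (ltn_eqF gt_rho) addr0.
Qed.

Lemma det_gram_two_term s (B : nat -> {poly R}) :
    (forall i, (i < n)%N -> y i != 0 -> (rho i < n)%N) ->
  \det (gram s n (fun i => x i *: B i + y i *: B (rho i))) =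
  \det two_term_mx ^+ 2 * \det (gram s n B).
Proof. by move=> rho_lt; rewrite gram_two_term // !det_mulmx det_tr; ring. Qed.

End TwoTermChange.

End MomentFunctional.

Section PairBases.
Variable R : comNzRingType.
Implicit Types (s : nat -> R) (a b : R).

Definition pair_basis c a b i : {poly R} :=
  if (i < c)%N then pairX 1 0 i.*2 else pairX b a (i - c)%N.*2.

(* Obtained from [pair_basis c a b] by replacing its [(c + q)]-th element by the [q]-th
   minus itself, then its [p]-th element by twice itself minus the [(c + p)]-th, for [p < f]. *)
Definition split_basis c f a b i : {poly R} :=
  if (i < c)%N then (if (i < f)%N then pairX (1 + b) a i.*2 else pairX 2 0 i.*2)
  else pairX (1 - b) (- a) (i - c)%N.*2.

Lemma prod_ord_split c f (x y : R) :
  \prod_(i < c + f) (if (i < c)%N then x else y) = x ^+ c * y ^+ f.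
Proof.
rewrite big_split_ord /= (eq_bigr (fun=> x)) => [|i _]; last by rewrite ltn_ord.
rewrite [X in _ * X](eq_bigr (fun=> y)) => [|i _]; last by rewrite ltnNge leq_addr.
by rewrite !prodr_const !card_ord.
Qed.

Lemma det_gram_pair_basis s c f a b : (f <= c <= f.+1)%N ->
  \det (gram s (c + f) (pair_basis c a b)) = a ^+ (f.*2) * \det (hankel s (c + f)).
Proof.
case/andP=> le_fc le_cf1.
pose deg i := if (i < c)%N then i.*2 else (i - c)%N.*2.+1.
pose x i := if (i < c)%N then 1 else a.
pose y i := if (i < c)%N then 0 else b.
have -> : gram s (c + f) (pair_basis c a b) =
          gram s (c + f) (fun i => x i *: 'X^(deg i) + y i *: 'X^(deg (i - c)%N)).
  apply: eq_gram => i lt_i; rewrite /pair_basis /pairX /x /y /deg.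
  case: ifP => lt_ic; first by rewrite !scale0r.
  by rewrite ifT 1?addrC //; lia.
rewrite (@det_gram_two_term _ _ x y (fun i => (i - c)%N) s (fun i => 'X^(deg i)));
  last by move=> i lt_i; rewrite /y; case: ifP => [_|ge_ic _]; [rewrite eqxx | lia].
rewrite det_two_term_mx_lower => [|i lt_i]; last first.
  by rewrite /y; case: ifP => [_|ge_ic _]; [rewrite eqxx | lia].
rewrite prod_ord_split expr1n mul1r -exprM -mul2n mulnC.
rewrite det_gram_monomials // => [i|i j]; rewrite /deg.
  by case: ifP; lia.
by rewrite !inE; case: ifP; case: ifP; lia.
Qed.

Lemma det_gram_split_basis s c f a b : (f <= c)%N ->
  \det (gram s (c + f) (split_basis c f a b)) =
  4 ^+ c * \det (gram s (c + f) (pair_basis c a b)).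
Proof.
move=> le_fc.
pose mid i := if (i < c)%N then pairX 1 0 i.*2 else pairX (1 - b) (- a) (i - c)%N.*2.
pose x1 i : R := if (i < c)%N then 1 else -1.
pose y1 i : R := if (i < c)%N then 0 else 1.
pose x2 i : R := if (i < c)%N then 2 else 1.
pose y2 i : R := if (i < f)%N then -1 else 0.
have -> : gram s (c + f) (split_basis c f a b) =
          gram s (c + f) (fun i => x2 i *: mid i + y2 i *: mid (i + c)%N).
  apply: eq_gram => i lt_i; rewrite /split_basis /mid /x2 /y2 addnK.
  case: (ltnP i c) => [lt_ic|ge_ic]; last first.
    by rewrite ltnNge (leq_trans le_fc ge_ic) scale0r scale1r addr0.
  rewrite [(i + c < c)%N]ltnNge leq_addl /=.
  by rewrite pairX_lin; case: ifP => _; congr pairX; ring.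
rewrite (@det_gram_two_term _ _ x2 y2 (fun i => (i + c)%N) s mid); last first.
  by move=> i lt_i; rewrite /y2; case: ifP => [lt_if _|_]; [lia | rewrite eqxx].
rewrite det_two_term_mx_upper => [|i lt_i]; last first.
  by rewrite /y2; case: ifP => [lt_if _|_]; [lia | rewrite eqxx].
have -> : gram s (c + f) mid =
          gram s (c + f) (fun i => x1 i *: pair_basis c a b i + y1 i *: pair_basis c a b (i - c)%N).
  apply: eq_gram => i lt_i; rewrite /pair_basis /mid /x1 /y1.
  case: ifP => lt_ic; first by rewrite scale0r scale1r addr0.
  by rewrite ifT; [rewrite pairX_lin; congr pairX; ring | lia].
rewrite (@det_gram_two_term _ _ x1 y1 (fun i => (i - c)%N) s (pair_basis c a b)); last first.
  by move=> i lt_i; rewrite /y1; case: ifP => [_|ge_ic _]; [rewrite eqxx | lia].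
rewrite det_two_term_mx_lower => [|i lt_i]; last first.
  by rewrite /y1; case: ifP => [_|ge_ic _]; [rewrite eqxx | lia].
rewrite !prod_ord_split !expr1n mulr1 mul1r !(exprAC _ _ 2) sqrrN expr1n expr1n.
by rewrite mul1r (_ : 2 ^+ 2 = 4 :> R) // -natrX.
Qed.

End PairBases.

Section DyadicProduct.
Variables (R : comNzRingType) (a : R).

Definition dyadic_prod N : {poly R} := \prod_(k < N) (1 + a%:P * 'X^(2 ^ k)).

Definition tau j : R := (dyadic_prod j.+1)`_j.

Lemma dyadic_prodS N :
  dyadic_prod N.+1 = (1 + a%:P * 'X) * (dyadic_prod N \Po 'X^2).
Proof.
rewrite /dyadic_prod big_ord_recl expn0 expr1; congr (_ * _).
elim: N => [|N IH]; first by rewrite !big_ord0 comp_polyC.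
rewrite !big_ord_recr /= comp_polyM -IH; congr (_ * _).
by rewrite comp_polyD comp_polyC comp_polyM comp_polyC comp_Xn_poly -exprM expnS mulnC.
Qed.

Lemma coef_dyadic_prodS_double N j : (dyadic_prod N.+1)`_j.*2 = (dyadic_prod N)`_j.
Proof.
rewrite dyadic_prodS mulrDl mul1r coefD -mulrA coefCM coefXM coef_comp_poly_Xn //.
rewrite dvdn2 odd_double /= -muln2 mulnK //.
case: j => [|j] /=; first by rewrite mulr0 addr0.
by rewrite coef_comp_poly_Xn // dvdn2 /= oddM andbF /= mulr0 addr0.
Qed.

Lemma coef_dyadic_prodS_doubleS N j :
  (dyadic_prod N.+1)`_j.*2.+1 = a * (dyadic_prod N)`_j.
Proof.
rewrite dyadic_prodS mulrDl mul1r coefD -mulrA coefCM coefXM coef_comp_poly_Xn //.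
rewrite dvdn2 /= odd_double /= add0r coef_comp_poly_Xn // dvdn2 odd_double /=.
by rewrite -muln2 mulnK.
Qed.

Lemma coef_dyadic_prod N j : (j < N)%N -> (dyadic_prod N)`_j = tau j.
Proof.
elim: N => [//|N IH] lt_jN.
case: (ltngtP j N) => [lt_jN'||->] //; last by lia.
rewrite /dyadic_prod big_ord_recr /= mulrDr mulr1 coefD mulrCA coefCM coefMXn.
by rewrite (ltn_trans lt_jN' (ltn_expl _ (ltnSn 1))) mulr0 addr0 IH.
Qed.

Lemma tau0 : tau 0 = 1.
Proof. by rewrite /tau /dyadic_prod big_ord1 expn0 expr1 coefD coef1 coefCM coefX mulr0 addr0. Qed.

Lemma tau_double j : tau j.*2 = tau j.
Proof.
by rewrite -(@coef_dyadic_prod j.*2.+2) ?coef_dyadic_prodS_double ?coef_dyadic_prod //; lia.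
Qed.

Lemma tau_doubleS j : tau j.*2.+1 = a * tau j.
Proof.
by rewrite -(@coef_dyadic_prod j.*2.+2) ?coef_dyadic_prodS_doubleS ?coef_dyadic_prod //; lia.
Qed.

End DyadicProduct.

Local Notation t := (tau 'i).
Local Notation u := (fun m => beta m.+1).

Definition tsum m : algC := t m + t m.+1.
Definition tdiff m : algC := t m - t m.+1.

Lemma mulCi_addCi_subCi : (1 + 'i) * (1 - 'i) = 2 :> algC.
Proof. have i2 := sqrCi algC; ring: i2. Qed.

Lemma addCi_neq0 : 1 + 'i != 0 :> algC.
Proof.
by apply/eqP => eq0; have /eqP := mulCi_addCi_subCi; rewrite eq0 mul0r eq_sym pnatr_eq0.
Qed.

Lemma mul2Ci_neq0 : 2 * 'i != 0 :> algC.
Proof. by rewrite mulf_neq0 ?pnatr_eq0 ?neq0Ci. Qed.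

Lemma betaS m : beta m.+1 = tsum m / (1 + 'i).
Proof.
rewrite /beta -/(dyadic_prod 'i _) mulrDl mul1r coefD coefXM /=.
by rewrite !coef_dyadic_prod // addrC.
Qed.

Lemma tsum_double m : tsum m.*2 = (1 + 'i) * t m.
Proof. by rewrite /tsum tau_double tau_doubleS mulrDl mul1r. Qed.

Lemma tsum_doubleS m : tsum m.*2.+1 = 'i * t m + t m.+1.
Proof. by rewrite /tsum tau_doubleS -doubleS tau_double. Qed.

Lemma tdiff_double m : tdiff m.*2 = (1 - 'i) * t m.
Proof. by rewrite /tdiff tau_double tau_doubleS mulrBl mul1r. Qed.

Lemma tdiff_doubleS m : tdiff m.*2.+1 = 'i * t m - t m.+1.
Proof. by rewrite /tdiff tau_doubleS -doubleS tau_double. Qed.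

Lemma gram_tsum n B : gram tsum n B = (1 + 'i) *: gram u n B.
Proof.
apply/matrixP => i j; rewrite !mxE /moment mulr_sumr; apply: eq_bigr => l _.
by rewrite betaS; field; exact: addCi_neq0.
Qed.

Lemma gram_tdiff_pair_basis n c :
  gram tdiff n (pair_basis c ('i - 1) 'i) = (1 - 'i) *: gram u n (pair_basis c (1 + 'i) (- 'i)).
Proof.
have i2 := sqrCi algC; have i1 := addCi_neq0.
apply/matrixP => i j; rewrite !mxE /pair_basis.
by do 2!case: ifP => _; rewrite !moment_pairXM -!doubleD -!doubleS !betaS
  !tsum_double !tsum_doubleS !tdiff_double !tdiff_doubleS; field: i2.
Qed.

(* Blockwise, this Gram matrix is [[t_(p+q), t_(p+q+1)]; [t_(p+q+1), t_(p+q)]]. *)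
Definition phi c f : algC := \det (gram u (c + f) (pair_basis c (1 + 'i) (- 'i))).

Lemma phi_hankel_tsum c f : (f <= c <= f.+1)%N ->
  (1 + 'i) ^+ (c + f)%N * phi c f = (2 * 'i) ^+ f * \det (hankel tsum (c + f)).
Proof.
have i2 := sqrCi algC.
move=> le_fcf; rewrite /phi -detZ -gram_tsum det_gram_pair_basis //.
by rewrite -mul2n exprM; congr (_ ^+ _ * _); ring: i2.
Qed.

Lemma phi_hankel_tdiff c f : (f <= c <= f.+1)%N ->
  (1 - 'i) ^+ (c + f)%N * phi c f = (- (2 * 'i)) ^+ f * \det (hankel tdiff (c + f)).
Proof.
have i2 := sqrCi algC.
move=> le_fcf; rewrite /phi -detZ -gram_tdiff_pair_basis det_gram_pair_basis //.
by rewrite -mul2n exprM; congr (_ ^+ _ * _); ring: i2.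
Qed.

Local Notation sb c f := (split_basis c f (1 + 'i) (- 'i)).

Lemma moment_split_basis c f i j :
  moment u (sb c f i * sb c f j) =
  if (i < c)%N then
    if (j < c)%N then
      if (i < f)%N || (j < f)%N then 2 * tsum (i + j) else 4 * t (i + j)
    else if (i < f)%N then 0 else 2 * tdiff (i + (j - c))%N
  else if (j < c)%N then (if (j < f)%N then 0 else 2 * tdiff (i - c + j)%N)
  else 2 * tdiff (i - c + (j - c))%N.
Proof.
have i2 := sqrCi algC; have i1 := addCi_neq0.
rewrite /split_basis; do 2!case: ifP => _; try case: ifP => _; try case: ifP => _;
  rewrite /= moment_pairXM -!doubleD -!doubleS !betaS !tsum_double !tsum_doubleS
    ?tdiff_double ?tdiff_doubleS /tsum /tdiff;
  field: i2; exact: i1.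
Qed.

Lemma phi_diag_hankel k :
  4 ^+ k * phi k k = 2 ^+ k * \det (hankel tsum k) * (2 ^+ k * \det (hankel tdiff k)).
Proof.
rewrite -det_gram_split_basis // /gram.
rewrite (det_mx_lblock k (f := fun i j => moment u (sb k k i * sb k k j))).
  rewrite -!detZ; congr (_ * _); congr (\det _); apply/matrixP => i j;
  by rewrite !mxE moment_split_basis ?ltn_ord ?ltnNge ?leq_addr //= !addKn.
by move=> i j /andP[lt_i le_j]; rewrite moment_split_basis lt_i ltnNge le_j.
Qed.

Section OddCase.
Variable k : nat.

Let g i j := moment u (sb k.+1 k i * sb k.+1 k j).

Let g_tsum i j :=
  if i == k then (if (j < k.+1)%N then 2 * tsum (k + j) else 0) else g i j.

Let g_tdiff i j :=
  if i == k then
    (if (j < k.+1)%N then (if j == k then 2 * tdiff (k + k) else 0) else 2 * tdiff (k + (j - k.+1)))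
  else g i j.

(* Row [k] splits along [4 t_(2k) = 2 tsum_(2k) + 2 tdiff_(2k)], and each summand makes
   the Gram matrix block triangular. *)
Lemma det_gram_split_row :
  \det (\matrix_(i < k.+1 + k, j < k.+1 + k) g i j) =
  \det (\matrix_(i < k.+1 + k, j < k.+1 + k) g_tsum i j) +
  \det (\matrix_(i < k.+1 + k, j < k.+1 + k) g_tdiff i j).
Proof.
rewrite -[\det (\matrix_(i, j) g_tsum i j)]mul1r -[\det (\matrix_(i, j) g_tdiff i j)]mul1r.
apply: (determinant_multilinear (i0 := lshift k ord_max)).
- apply/rowP => j; rewrite !mxE /g_tsum /g_tdiff /g /= eqxx !mul1r moment_split_basis ltnSn ltnn /=.
  case: (ltngtP j k) => [lt_jk|gt_jk|->]; rewrite ?ltnS ?lt_jk ?(ltnW lt_jk) ?addr0 //.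
    by rewrite leqNgt gt_jk add0r.
  by rewrite leqnn /tsum /tdiff; ring.
- by apply/matrixP => i j; rewrite !mxE /g_tsum ifN // eq_sym (neq_lift (lshift k ord_max)).
- by apply/matrixP => i j; rewrite !mxE /g_tdiff ifN // eq_sym (neq_lift (lshift k ord_max)).
Qed.

Lemma det_gram_row_tsum :
  \det (\matrix_(i < k.+1 + k, j < k.+1 + k) g_tsum i j) =
  2 ^+ k.+1 * \det (hankel tsum k.+1) * (2 ^+ k * \det (hankel tdiff k)).
Proof.
rewrite (det_mx_lblock k (f := g_tsum)) => [|i j /andP[lt_i le_j]].
  rewrite -!detZ; congr (_ * _); congr (\det _); apply/matrixP => i j;
    rewrite !mxE /g_tsum /g moment_split_basis; last first.
    by rewrite ifN ?ltnNge ?leq_addr /= ?addKn //; lia.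
  rewrite !ltn_ord; have [-> //|ne_ik] := eqVneq (i : nat) k.
  by rewrite (_ : (i < k)%N) //; have := ltn_ord i; rewrite ltnS leq_eqVlt (negbTE ne_ik).
rewrite /g_tsum /g moment_split_basis lt_i ltnNge le_j /=.
by case: eqVneq => // ne_ik; rewrite (_ : (i < k)%N) // ltn_neqAle ne_ik -ltnS.
Qed.

Lemma det_gram_row_tdiff :
  \det (\matrix_(i < k.+1 + k, j < k.+1 + k) g_tdiff i j) =
  2 ^+ k * \det (hankel tsum k) * (2 ^+ k.+1 * \det (hankel tdiff k.+1)).
Proof.
rewrite (_ : \det (\matrix_(i < k.+1 + k, j < k.+1 + k) g_tdiff i j) =
             \det (\matrix_(i < k + k.+1, j < k + k.+1) g_tdiff i j)); last by rewrite addSnnS.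
rewrite (det_mx_ublock k.+1 (f := g_tdiff)) => [|i j /andP[lt_j le_i]]; last first.
  rewrite /g_tdiff /g moment_split_basis.
  by repeat case: ifP => ?; rewrite //; exfalso; lia.
congr (_ * _).
  rewrite -detZ; congr (\det _); apply/matrixP => i j.
  by rewrite !mxE /g_tdiff /g moment_split_basis !ltn_ord ltn_eqF // !(ltn_trans (ltn_ord _)).
(* The lower block is the Hankel matrix of [tdiff] with its last index moved first. *)
pose sigma i := if i == 0 then k else i.-1.
rewrite -detZ (_ : 2 *: hankel tdiff k.+1 = \matrix_(i, j) (2 * tdiff (i + j)%N)); last first.
  by apply/matrixP => i j; rewrite !mxE.
rewrite -(det_mx_reindex (fun a b => 2 * tdiff (a + b)%N) (sigma := sigma)).
- congr (\det _); apply/matrixP => i j; rewrite !mxE /g_tdiff /g moment_split_basis /sigma.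
  by repeat case: ifP => ?; try (by exfalso; lia); congr (_ * tdiff _); lia.
- by move=> i; rewrite /sigma; case: ifP; lia.
- by move=> i j; rewrite !inE /sigma; do 2!case: ifP; lia.
Qed.

Lemma phi_subdiag_hankel :
  4 ^+ k.+1 * phi k.+1 k =
  2 ^+ k.+1 * \det (hankel tsum k.+1) * (2 ^+ k * \det (hankel tdiff k)) +
  2 ^+ k * \det (hankel tsum k) * (2 ^+ k.+1 * \det (hankel tdiff k.+1)).
Proof.
rewrite /phi -det_gram_split_basis // det_gram_split_row.
by rewrite det_gram_row_tsum det_gram_row_tdiff.
Qed.

End OddCase.

Lemma double_cases n : exists j, n = j.*2 \/ n = j.*2.+1.
Proof.
exists n./2; rewrite -[n in n = _]odd_double_half -[n in _ \/ n = _]odd_double_half.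
by case: (odd n); [right | left].
Qed.

Definition hankel_closed_form n : Prop :=
  \det (hankel tsum n) = (1 + 'i) ^+ odd n * 2 ^+ n./2 /\
  \det (hankel tdiff n) = (1 - 'i) ^+ odd n * 2 ^+ n./2.

Lemma closed_form_of_phi c f : (f <= c <= f.+1)%N ->
  phi c f = 2 ^+ f -> hankel_closed_form (c + f).
Proof.
move=> le_fcf phi_f; have i2 := sqrCi algC.
have solve (x y h : algC) : y != 0 -> x ^+ 2 = y ->
    x ^+ (c + f) * 2 ^+ f = y ^+ f * h -> h = x ^+ odd (c + f) * 2 ^+ (c + f)./2.
  move=> y_neq0 sqr_x eq_h; apply: (mulfI (expf_neq0 f y_neq0)); rewrite -eq_h.
  have [-> | ->] : c = f \/ c = f.+1 by lia.
    by rewrite addnn /= doubleK odd_double -mul2n exprM sqr_x; ring.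
  by rewrite addSn addnn /= uphalf_double odd_double -mul2n exprS exprM sqr_x; ring.
split.
  apply: (solve _ _ _ mul2Ci_neq0); first by ring: i2.
  by rewrite -phi_f phi_hankel_tsum.
apply: (solve _ (- (2 * 'i))); first by rewrite oppr_eq0 mul2Ci_neq0.
  by ring: i2.
by rewrite -phi_f phi_hankel_tdiff.
Qed.

Lemma phi_diag_value k : hankel_closed_form k -> phi k k = 2 ^+ k.
Proof.
case=> hs hd; have i2 := sqrCi algC; have n4 : 4 != 0 :> algC by rewrite pnatr_eq0.
apply: (mulfI (expf_neq0 k n4)); rewrite phi_diag_hankel hs hd (natrM _ 2 2) exprMn.
have [j [-> | ->]] := double_cases k;
  rewrite /= ?uphalf_double ?doubleK ?odd_double -addnn ?exprS !exprD; ring: i2.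
Qed.

Lemma phi_subdiag_value k :
  hankel_closed_form k -> hankel_closed_form k.+1 -> phi k.+1 k = 2 ^+ k.
Proof.
case=> hs hd [hs1 hd1]; have i2 := sqrCi algC; have n4 : 4 != 0 :> algC by rewrite pnatr_eq0.
apply: (mulfI (expf_neq0 k.+1 n4)); rewrite phi_subdiag_hankel hs hd hs1 hd1 (natrM _ 2 2) exprMn.
have [j [-> | ->]] := double_cases k;
  rewrite /= ?negbK ?uphalf_double ?doubleK ?odd_double -addnn !exprS !exprD; ring: i2.
Qed.

Lemma phi10 : phi 1 0 = 1.
Proof.
rewrite /phi det_mx11 mxE /pair_basis /= moment_pairXM betaS /tsum -!doubleD.
by rewrite tau_doubleS tau_double tau0; field; exact: addCi_neq0.
Qed.

Lemma hankel_closed_form_holds n : hankel_closed_form n.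
Proof.
elim/ltn_ind: n => n IH; have [j [en | en]] := double_cases n; subst n.
  rewrite -addnn; apply: closed_form_of_phi; first by rewrite leqnn leqnSn.
  case: j IH => [_|j IH]; first exact: det_mx00.
  by apply: phi_diag_value; apply: IH; rewrite -addnn; lia.
rewrite -addnn -addSn; apply: closed_form_of_phi; first by rewrite leqnSn leqnn.
case: j IH => [_|j IH]; first exact: phi10.
by apply: phi_subdiag_value; apply: IH; rewrite -addnn; lia.
Qed.

Lemma det_hankel_beta n : \det (hankel u n) = (- 'i) ^+ n./2.
Proof.
have i2 := sqrCi algC; have i1 := addCi_neq0.
have [hs _] := hankel_closed_form_holds n; move: hs.
have -> : hankel tsum n = (1 + 'i) *: hankel u n.
  by apply/matrixP => a b; rewrite !mxE betaS mulrC divfK.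
rewrite detZ (_ : (1 + 'i) ^+ n = (1 + 'i) ^+ odd n * (2 * 'i) ^+ n./2); last first.
  by rewrite -{1}[n]odd_double_half exprD -mul2n exprM; congr (_ * _ ^+ _); ring: i2.
rewrite -mulrA => /(mulfI (expf_neq0 _ i1)) hu.
apply: (mulfI (expf_neq0 n./2 mul2Ci_neq0)); rewrite hu -exprMn.
by congr (_ ^+ _); ring: i2.
Qed.

Theorem mainTheorem20 (n : nat) : (1 <= n)%N ->
  \det (hankelH n) = (- 'i) ^+ (n./2).
Proof.
move=> _; rewrite -det_hankel_beta; congr (\det _).
by apply/matrixP => a b; rewrite !mxE addn1.
Qed.
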